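(* For any $d,d'\in D$, the function $f:D'^2\to\mathbb{R}$ given by: for $x,y\in D$, $f(x,y)=0$ if $x=d$ or $y=d'$ and $f(x,y)=1$ otherwise; $f(d,0)=f(0,d')=f(0,0)=0$; $f(a,0)=\tfrac12$ for $a\in D\setminus\{d\}$; $f(0,b)=\tfrac12$ for $b\in D\setminus\{d'\}$ (the basic $k$-submodular relaxation of the soft version of $(x=d\lor y=d')$) is $k$-submodular representable.
   Context: $D=\{1,\dots,k\}$, $D'=\{0\}\cup D$. For a variable set $X$ and $v\in X$ let $X_v=\{v_i:i\in D\}$. An $(X,k)$-network is a directed network with nonnegative capacities $c$ on vertex set $\bigcup_{v\in X}X_v\cup\{s,t\}$; an $s$-$t$ cut $S$ has capacity the total capacity of edges leaving $S$. For $\phi:X\to D'$, $S_\phi=\{s\}\cup\{v_{\phi(v)}:\phi(v)\ne0\}$; the network represents $g$ if $c(S_\phi)=g(\phi)$ for all $\phi$. For an $s$-$t$ cut $S$, $\nu(S)=\{s\}\cup\{v_i:S\cap X_v=\{v_i\}\}$; the network is $k$-submodular if $c(S)\ge c(\nu(S))$ for every $s$-$t$ cut. A function of variables $X$ is $k$-submodular representable if some $k$-submodular $(X,k)$-network represents it. *)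

From HB Require Import structures.
From mathcomp Require Import all_boot all_order all_algebra.
From mathcomp Require Import reals.
Set Implicit Arguments. Unset Strict Implicit. Unset Printing Implicit Defensive.
Import Order.TTheory GRing.Theory Num.Theory.
Local Open Scope ring_scope.

(* Conventions: D = {1..k} is encoded by 'I_k (i : 'I_k stands for i+1);
   D' = {0} u D is encoded by option 'I_k (None stands for 0).
   A variable set X is a finType V.  Vertices of an (X,k)-network:
   inl (v, i) is v_i, inr true is s, inr false is t. *)

Definition vertex (V : finType) (k : nat) : finType := ((V * 'I_k)%type + bool)%type.
Definition src {V : finType} {k : nat} : vertex V k := inr true.
Definition snk {V : finType} {k : nat} : vertex V k := inr false.
Definition vtx {V : finType} {k : nat} (v : V) (i : 'I_k) : vertex V k := inl (v, i).

Section Networks.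
Variables (R : realType) (V : finType) (k : nat).

(* a directed network is given by its capacity function (0 = no edge) *)
Definition capacity := vertex V k -> vertex V k -> R.

Definition nonneg_cap (c : capacity) := forall u w, 0 <= c u w.

Definition st_cut (S : {set vertex V k}) := (src \in S) && (snk \notin S).

Definition cutcap (c : capacity) (S : {set vertex V k}) : R :=
  \sum_(u in S) \sum_(w in ~: S) c u w.

Definition S_of (phi : V -> option 'I_k) : {set vertex V k} :=
  src |: [set u | if u is inl (v, i) then phi v == Some i else false].

Definition nu (S : {set vertex V k}) : {set vertex V k} :=
  src |: [set u | if u is inl (v, i)
                  then [set j | vtx v j \in S] == [set i] else false].

Definition represents (c : capacity) (g : (V -> option 'I_k) -> R) :=
  forall phi, cutcap c (S_of phi) = g phi.

Definition ksubmodular_net (c : capacity) :=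
  forall S, st_cut S -> cutcap c S >= cutcap c (nu S).

Definition ksubmod_representable (g : (V -> option 'I_k) -> R) :=
  exists c : capacity, [/\ nonneg_cap c, ksubmodular_net c & represents c g].

End Networks.

Definition f_or (R : realType) (k : nat) (d d' : 'I_k) (a b : option 'I_k) : R :=
  match a, b with
  | Some x, Some y => if (x == d) || (y == d') then 0 else 1
  | Some x, None => if x == d then 0 else 1 / 2
  | None, Some y => if y == d' then 0 else 1 / 2
  | None, None => 0
  end.

From HB Require Import structures.
From mathcomp Require Import all_boot all_order all_algebra.
From mathcomp Require Import reals.
From mathcomp Require Import ring lra zify.
Set Implicit Arguments. Unset Strict Implicit. Unset Printing Implicit Defensive.
Import Order.TTheory GRing.Theory Num.Theory.
Local Open Scope ring_scope.

(* The network has an arc x_a -> y_d' of capacity 1/2 for every a <> d and an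
   arc y_b -> x_d of capacity 1/2 for every b <> d'.  The capacity of a cut S
   depends only on P = {a | x_a in S} and Q = {b | y_b in S}: it is
   (|P \ {d}| [d' notin Q] + |Q \ {d'}| [d notin P]) / 2, which on the cuts S_phi
   gives f.  The map nu replaces every non-singleton part by the empty set, so each
   summand for nu(S) is 0 or 1/2; a positive first summand forces P = {a} with
   a <> d and Q <> {d'}, which already makes the capacity of S positive (and
   symmetrically for the second), and if both summands are positive then P and Q
   are singletons, so that nu(S) = S. *)

Lemma sum_eq_if (R : nmodType) (T : finType) (A : {pred T}) (t0 : T) (r : R) :
  \sum_(t in A) (if t == t0 then r else 0) = if t0 \in A then r else 0.
Proof.
case: ifP => At0; last by apply: big1 => t At; case: eqP => // tt0; rewrite -tt0 At in At0.
rewrite (bigD1 t0) //= eqxx big1 ?addr0 // => t /andP[_ /negbTE ->] //.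
Qed.

Section SingletonPart.
Variable T : finType.
Local Open Scope nat_scope.
Implicit Types (P Q : {set T}).

Definition singleton_part P := [set t | P == [set t]].

Definition fan_count (e e' : T) P Q : nat := #|P :\ e| * (e' \notin Q).

Definition or_count (e e' : T) P Q : nat := fan_count e e' P Q + fan_count e' e Q P.

Lemma card_singleton_part P : #|singleton_part P| <= 1.
Proof.
by apply/card_le1_eqP => a b; rewrite !inE => /eqP-> /eqP/set1_inj ->.
Qed.

Lemma singleton_part_id P : singleton_part P != set0 -> singleton_part P = P.
Proof.
case/set0Pn => a; rewrite inE => /eqP PE; apply/setP => t.
by rewrite !inE PE in_set1; apply/eqP/eqP => [/set1_inj|->].
Qed.

Lemma card_set1D1 (a e : T) : #|[set a] :\ e| = (a != e).
Proof.
by have := cardsD1 e [set a]; rewrite cards1 in_set1 eq_sym; case: (a == e) => /=; lia.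
Qed.

Lemma or_count_set1_pos P Q (e e' a : T) :
  P = [set a] -> a != e -> Q != [set e'] -> 0 < or_count e e' P Q.
Proof.
move=> -> ae Qe'; rewrite /or_count /fan_count card_set1D1 ae.
case: (boolP (e' \in Q)) => [e'Q | _]; last by lia.
suff: 0 < #|Q :\ e'| by rewrite in_set1 eq_sym (negbTE ae); lia.
rewrite card_gt0 setD_eq0 subset1 (negbTE Qe') /=.
by apply: contraTneq e'Q => ->; rewrite inE.
Qed.

Lemma fan_count_singleton_le1 (e e' : T) P Q : fan_count e e' (singleton_part P) Q <= 1.
Proof.
rewrite /fan_count; have := card_singleton_part P.
have := subset_leq_card (subD1set (singleton_part P) e); case: (e' \notin Q); lia.
Qed.

Lemma fan_count_singleton_pos (e e' : T) P Q :
  0 < fan_count e e' (singleton_part P) (singleton_part Q) -> 0 < or_count e e' P Q.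
Proof.
rewrite /fan_count muln_gt0 lt0b => /andP[/card_gt0P[a] aP QE].
move: aP; rewrite !inE => /andP[ae /eqP PE].
by apply: or_count_set1_pos PE ae _; move: QE; rewrite inE.
Qed.

Lemma fan_count_singleton_id (e e' : T) P Q :
  0 < fan_count e e' (singleton_part P) Q -> singleton_part P = P.
Proof.
rewrite /fan_count muln_gt0 => /andP[/card_gt0P[a] aP _]; apply: singleton_part_id.
by apply/set0Pn; exists a; move: aP; rewrite inE => /andP[].
Qed.

Lemma or_count_singleton_le (e e' : T) P Q :
  or_count e e' (singleton_part P) (singleton_part Q) <= or_count e e' P Q.
Proof.
have le1 := fan_count_singleton_le1 e e' P (singleton_part Q).
have le1' := fan_count_singleton_le1 e' e Q (singleton_part P).
have pos := @fan_count_singleton_pos e e' P Q.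
have pos' := @fan_count_singleton_pos e' e Q P.
rewrite /or_count addnC in pos'; rewrite /or_count in pos *.
have [x0 | xpos] := posnP (fan_count e e' (singleton_part P) (singleton_part Q)); first lia.
have [y0 | ypos] := posnP (fan_count e' e (singleton_part Q) (singleton_part P)); first lia.
by rewrite (fan_count_singleton_id xpos) (fan_count_singleton_id ypos).
Qed.

End SingletonPart.

Section CutAlgebra.
Variables (R : realType) (V : finType) (k : nat).
Implicit Types (S : {set vertex V k}) (r : R).

Definition edge_cap (u0 w0 : vertex V k) r : capacity R V k :=
  fun u w => if (u == u0) && (w == w0) then r else 0.

Definition fan_cap (v w : V) (e e' : 'I_k) r : capacity R V k :=
  fun u u' => \sum_(a | a != e) edge_cap (vtx v a) (vtx w e') r u u'.

Definition slice S (v : V) : {set 'I_k} := [set i | vtx v i \in S].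

Lemma cutcap_edge u0 w0 r S :
  cutcap (edge_cap u0 w0 r) S = if (u0 \in S) && (w0 \notin S) then r else 0.
Proof.
rewrite /cutcap /edge_cap.
under eq_bigr => u _.
  under eq_bigr => w _ do rewrite andbC if_and.
  rewrite sum_eq_if in_setC -if_and andbC if_and.
  over.
by rewrite sum_eq_if -if_and.
Qed.

Lemma cutcapD (c1 c2 : capacity R V k) S :
  cutcap (fun u w => c1 u w + c2 u w) S = cutcap c1 S + cutcap c2 S.
Proof.
by rewrite /cutcap -big_split; apply: eq_bigr => u _; rewrite -big_split.
Qed.

Lemma cutcap_sum (I : finType) (P : pred I) (c : I -> capacity R V k) S :
  cutcap (fun u w => \sum_(i | P i) c i u w) S = \sum_(i | P i) cutcap (c i) S.
Proof.
rewrite /cutcap; under eq_bigr do rewrite exchange_big.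
by rewrite exchange_big.
Qed.

Lemma cutcap_fan v w e e' r S :
  cutcap (fan_cap v w e e' r) S = r *+ (#|slice S v :\ e| * (e' \notin slice S w)).
Proof.
rewrite cutcap_sum; under eq_bigr do rewrite cutcap_edge.
rewrite /slice inE; case: (vtx w e' \in S) => /=.
  by rewrite muln0 big1 // => a _; rewrite andbF.
rewrite muln1 -sumr_const big_mkcond [RHS]big_mkcond; apply: eq_bigr => a _.
by rewrite !inE andbT; case: (a != e).
Qed.

Lemma fan_cap_ge0 v w e e' r : 0 <= r -> nonneg_cap (fan_cap v w e e' r).
Proof.
by move=> r_ge0 u u'; apply: sumr_ge0 => a _; rewrite /edge_cap; case: ifP.
Qed.

Lemma slice_nu S v : slice (nu S) v = singleton_part (slice S v).
Proof. by apply/setP => i; rewrite !inE. Qed.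

Lemma slice_S_of (phi : V -> option 'I_k) v :
  slice (S_of phi) v = [set i | phi v == Some i].
Proof. by apply/setP => i; rewrite !inE. Qed.

End CutAlgebra.

Lemma set_eq_Some (T : finType) (o : option T) :
  [set t | o == Some t] = if o is Some x then [set x] else set0.
Proof.
apply/setP => t; case: o => [x|]; rewrite !inE // eq_sym.
by apply/eqP/eqP => [[]|->].
Qed.

Section OrNetwork.
Variables (R : realType) (k : nat) (d d' : 'I_k).

Definition or_net : capacity R bool k := fun u w =>
  fan_cap true false d d' (1 / 2) u w + fan_cap false true d' d (1 / 2) u w.

Lemma or_net_ge0 : nonneg_cap or_net.
Proof.
have half_ge0 : 0 <= 1 / 2 :> R by lra.
by move=> u w; apply: addr_ge0; apply: fan_cap_ge0.
Qed.

Lemma cutcap_or_net S :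
  cutcap or_net S = (1 / 2) *+ or_count d d' (slice S true) (slice S false).
Proof. by rewrite cutcapD !cutcap_fan -mulrnDr. Qed.

Lemma f_or_count a b :
  f_or R d d' a b =
  (1 / 2) *+ or_count d d' [set i | a == Some i] [set i | b == Some i].
Proof.
rewrite !set_eq_Some /or_count /fan_count.
case: a b => [x|] [y|] /=;
  rewrite ?card_set1D1 ?set0D ?cards0 ?in_set1 ?in_set0 ?[d' == _]eq_sym ?[d == _]eq_sym;
  try case: (x == d); try case: (y == d') => /=;
  rewrite ?(mul0n, muln0, mul1n, addn0, add0n) ?mulr0n ?mulr1n ?mulr2n //.
by field.
Qed.
End OrNetwork.

Theorem lemma22 (R : realType) (k : nat) (d d' : 'I_k) :
  ksubmod_representable
    (fun phi : bool -> option 'I_k => f_or R d d' (phi true) (phi false)).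
Proof.
exists (or_net R d d'); split.
- exact: or_net_ge0.
- move=> S _; rewrite !cutcap_or_net !slice_nu.
  by apply: ler_wpMn2l; [lra | exact: or_count_singleton_le].
- by move=> phi; rewrite cutcap_or_net !slice_S_of f_or_count.
Qed.
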